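(* Let $(X,\mu)$ be an irreducible discrete-time BRW with global survival, i.e. $\bar q(x)<1$ for all $x\in X$. Then there exist $x,y\in X$ with $q(x,y)\neq\bar q(x)$ (no strong local survival) if and only if there exist a finite nonempty set $A\subseteq X$ and $v\in[0,1]^X$ with $v\ge\bar q$ such that $G(v|x)\ge v(x)$ for all $x\in X\setminus A$, and $(\tau v)(x_0)>\max_{x\in A}(\tau v)(x)$ for some $x_0\in X\setminus A$, where $(\tau v)(x):=\frac{v(x)-\bar q(x)}{1-\bar q(x)}$.
   Context: $S_X:=\{f:X\to\mathbb N:\sum_yf(y)<\infty\}$, $X$ finite or countable. A discrete-time BRW $(X,\mu)$: probability measures $\mu_x$ on $S_X$; each particle at $x$ is independently replaced by $f(y)$ particles at each $y$, $f\sim\mu_x$. First moments $m_{xy}:=\sum_ff(y)\mu_x(f)$ with $\sup_x\sum_ym_{xy}<\infty$; irreducible means every $y$ is reachable from every $x$ via a path with $m_{x_ix_{i+1}}>0$. Generating function $G(z|x):=\sum_f\mu_x(f)\prod_yz(y)^{f(y)}$. Standing assumption: in every class of mutually reachable vertices there is a vertex at which a particle has, with positive probability, a number of children inside the class different from one. $q(x,y)$: probability starting from one particle at $x$ that eventually no particle is at $y$; $\bar q(x)$: probability of eventual total extinction. *)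

From Stdlib Require Import Reals List ClassicalEpsilon ClassicalDescription Relations.
Open Scope R_scope.

Set Implicit Arguments.

(* Value of a convergent series sum_{k>=0} u k (junk if not convergent). *)
Definition sumR (u : nat -> R) : R :=
  epsilon (inhabits 0) (fun l => infinite_sum u l).

(* Limit of a convergent real sequence (junk if not convergent). *)
Definition limR (u : nat -> R) : R :=
  epsilon (inhabits 0) (fun l => Un_cv u l).

Definition ind (P : Prop) : R :=
  if excluded_middle_informative P then 1 else 0.

Fixpoint countP (X : Type) (P : X -> Prop) (l : list X) : nat :=
  match l with
  | nil => 0%nat
  | c :: l' => ((if excluded_middle_informative (P c) then 1 else 0) + countP P l')%nat
  end.

Fixpoint prodR (l : list R) : R :=
  match l with nil => 1 | a :: l' => a * prodR l' end.

(* An element f of S_X (finitely supported X -> N) is represented by a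
   finite list of positions of children: f(y) = number of occurrences
   of y in the list.  The law mu_x on the countable set S_X is given as
   a discrete measure  mu_x = sum_k p x k * delta_{ch x k}
   (every probability measure on the countable set S_X has this form). *)

Record BRW (X : Type) := {
  p  : X -> nat -> R;
  ch : X -> nat -> list X
}.

Section BRWdefs.
Variable X : Type.
Variable eqdec : forall x y : X, {x = y} + {x <> y}.
Variable mu : BRW X.

Definition nchild (x : X) (k : nat) (y : X) : nat :=
  count_occ eqdec (ch mu x k) y.

Definition is_prob_law : Prop :=
  forall x, (forall k, 0 <= p mu x k) /\ infinite_sum (p mu x) 1.

Definition m_term (x y : X) (k : nat) : R := p mu x k * INR (nchild x k y).

Definition m (x y : X) : R := sumR (m_term x y).

Definition bounded_moments : Prop :=
  (forall x y, exists l, infinite_sum (m_term x y) l) /\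
  exists M : R, forall x (ys : list X), NoDup ys ->
    fold_right Rplus 0 (map (m x) ys) <= M.

Definition reach : X -> X -> Prop :=
  clos_refl_trans X (fun a b => 0 < m a b).

Definition irreducible : Prop := forall x y, reach x y.

Definition probk (w : X) (E : list X -> Prop) : R :=
  sumR (fun k => p mu w k * ind (E (ch mu w k))).

Definition standing_assumption : Prop :=
  forall x, exists w, reach x w /\ reach w x /\
    0 < probk w (fun l => countP (fun c => reach x c /\ reach c x) l <> 1%nat).

Definition G (z : X -> R) (x : X) : R :=
  sumR (fun k => p mu x k * prodR (map z (ch mu x k))).

Fixpoint Gn (n : nat) (z : X -> R) : X -> R :=
  match n with
  | O => z
  | S n' => G (Gn n' z)
  end.

(* bar q(x) = P_x(total extinction) = lim_n P_x(no particle at time n)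
            = lim_n G^{(n)}(0|x). *)
Definition qbar (x : X) : R := limR (fun n => Gn n (fun _ => 0) x).

(* F y N w = P_w(no particle at y at any of the times 0,...,N):
   F y 0 w = [w <> y],  F y (N+1) w = [w <> y] * G(F y N | w). *)
Fixpoint F (y : X) (N : nat) : X -> R :=
  match N with
  | O => fun w => ind (w <> y)
  | S N' => fun w => ind (w <> y) * G (F y N') w
  end.

(* q(x,y) = P_x(eventually no particle at y)
          = lim_n P_x(no particle at y at any time >= n)
          = lim_n lim_N P_x(no particle at y at times n,...,n+N)
          = lim_n lim_N G^{(n)}(F y N | x). *)
Definition q (x y : X) : R :=
  limR (fun n => limR (fun N => Gn n (F y N) x)).

Definition tau (v : X -> R) (x : X) : R := (v x - qbar x) / (1 - qbar x).

End BRWdefs.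

From Pilot Require Import Defs.
From Stdlib Require Import Reals List Lra Lia ClassicalEpsilon Classical FunctionalExtensionality.
Open Scope R_scope.

(* Let [fl y x] be the probability, from [x], that no particle ever visits [y]; then
   [q(., y) = lim G^n fl y], squeezed between [G^n 0] and [G^n qbar = qbar], so
   [q(., y) = qbar] exactly when [fl y <= qbar].  If [fl y x0 > qbar x0], then
   [A = [y]] and [v = max (fl y) qbar] work, [fl y] being G-harmonic off [y] and zero at [y].
   Conversely, freeze particles once they reach [A] and let [w = M + (1 - M) qbar] with
   [max_A tau v <= M < tau v x0].  The function equal to [w] on [A] and [1] off [A] is a
   supersolution dominating the subsolution [v], so the limit of its iterates at [x0] is
   at least [v x0 > w x0]; but its [m]-th iterate is a fixed fraction of the way down to the
   probability of avoiding [a] in [A] up to time [m], and convexity of [G] together with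
   [fl a <= qbar <= w] pushes that limit down to [w x0]. *)

Lemma sumR_eq (u : nat -> R) (l : R) : infinite_sum u l -> sumR u = l.
Proof.
  intro Hu. unfold sumR.
  exact (uniqueness_sum _ _ _
    (epsilon_spec (inhabits 0) (infinite_sum u) (ex_intro _ l Hu)) Hu).
Qed.

Lemma limR_eq (u : nat -> R) (l : R) : Un_cv u l -> limR u = l.
Proof.
  intro Hu. unfold limR.
  exact (UL_sequence _ _ _ (epsilon_spec (inhabits 0) (Un_cv u) (ex_intro _ l Hu)) Hu).
Qed.

Lemma Un_cv_const (c : R) : Un_cv (fun _ => c) c.
Proof. intros e He. exists 0%nat. intros. unfold Rdist. rewrite Rminus_diag, Rabs_R0. lra. Qed.

Lemma Un_cv_S (u : nat -> R) (l : R) : Un_cv u l -> Un_cv (fun n => u (S n)) l.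
Proof. intros Hu e He. destruct (Hu e He) as [N HN]. exists N. intros n Hn. apply HN. lia. Qed.

Lemma Un_cv_le_const (u : nat -> R) (l c : R) : (forall n, u n <= c) -> Un_cv u l -> l <= c.
Proof. intros Hc Hu. exact (@Rle_cv_lim u (fun _ => c) l c Hc Hu (Un_cv_const c)). Qed.

Lemma Un_cv_ge_const (u : nat -> R) (l c : R) : (forall n, c <= u n) -> Un_cv u l -> c <= l.
Proof. intros Hc Hu. exact (@Rle_cv_lim (fun _ => c) u c l Hc (Un_cv_const c) Hu). Qed.

Lemma Un_cv_lin (u v : nat -> R) (lu lv s t : R) :
  Un_cv u lu -> Un_cv v lv -> Un_cv (fun n => s * u n + t * v n) (s * lu + t * lv).
Proof. intros Hu Hv. apply CV_plus; apply CV_mult; auto using Un_cv_const. Qed.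

Lemma Un_cv_squeeze (a u b : nat -> R) (l : R) :
  (forall n, a n <= u n <= b n) -> Un_cv a l -> Un_cv b l -> Un_cv u l.
Proof.
  intros H Ha Hb e He. destruct (Ha e He) as [N1 H1]. destruct (Hb e He) as [N2 H2].
  exists (N1 + N2)%nat. intros n Hn.
  specialize (H1 n ltac:(lia)). specialize (H2 n ltac:(lia)). specialize (H n).
  unfold Rdist in *. apply Rabs_def2 in H1. apply Rabs_def2 in H2. apply Rabs_def1; lra.
Qed.

Lemma Un_cv_limR_growing (u : nat -> R) (c : R) :
  Un_growing u -> (forall n, u n <= c) -> Un_cv u (limR u).
Proof.
  intros Hg Hc. destruct (growing_cv u Hg) as [l Hl].
  - exists c. intros x [i ->]. auto.
  - rewrite (limR_eq u l Hl). exact Hl.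
Qed.

Lemma Un_cv_limR_decreasing (u : nat -> R) (c : R) :
  Un_decreasing u -> (forall n, c <= u n) -> Un_cv u (limR u).
Proof.
  intros Hd Hc. destruct (decreasing_cv u Hd) as [l Hl].
  - exists (- c). intros x [i ->]. unfold opp_seq. specialize (Hc i). lra.
  - rewrite (limR_eq u l Hl). exact Hl.
Qed.

Lemma infinite_sum_le (a b : nat -> R) (la lb : R) :
  (forall k, a k <= b k) -> infinite_sum a la -> infinite_sum b lb -> la <= lb.
Proof.
  intros H Ha Hb. apply (@Rle_cv_lim (sum_f_R0 a) (sum_f_R0 b)); auto.
  intro n. apply sum_Rle. auto.
Qed.

Lemma infinite_sum_lin (a b : nat -> R) (la lb s t : R) :
  infinite_sum a la -> infinite_sum b lb ->
  infinite_sum (fun k => s * a k + t * b k) (s * la + t * lb).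
Proof.
  intros Ha Hb.
  assert (Hpartial : forall n, sum_f_R0 (fun k => s * a k + t * b k) n =
                               s * sum_f_R0 a n + t * sum_f_R0 b n).
  { intro n. rewrite sum_plus, !scal_sum. f_equal; apply sum_eq; intros; ring. }
  intros e He. destruct (Un_cv_lin _ _ _ _ s t Ha Hb e He) as [N HN].
  exists N. intros n Hn. rewrite Hpartial. apply HN; auto.
Qed.

Lemma sum_f_R0_tail_le (a b : nat -> R) (K d : nat) :
  (forall k, Rabs (a k) <= b k) ->
  Rabs (sum_f_R0 a (K + d) - sum_f_R0 a K) <= sum_f_R0 b (K + d) - sum_f_R0 b K.
Proof.
  intro H. induction d as [|d IH].
  - rewrite Nat.add_0_r, !Rminus_diag, Rabs_R0. lra.
  - replace (K + S d)%nat with (S (K + d)) by lia. simpl.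
    specialize (H (S (K + d))).
    replace (sum_f_R0 a (K + d) + a (S (K + d)) - sum_f_R0 a K) with
      ((sum_f_R0 a (K + d) - sum_f_R0 a K) + a (S (K + d))) by ring.
    eapply Rle_trans; [apply Rabs_triang | lra].
Qed.

Lemma infinite_sum_tail_le (a b : nat -> R) (la lb : R) (K : nat) :
  (forall k, Rabs (a k) <= b k) -> infinite_sum a la -> infinite_sum b lb ->
  Rabs (la - sum_f_R0 a K) <= lb - sum_f_R0 b K.
Proof.
  intros H Ha Hb. apply Rle_plus_epsilon. intros e He.
  destruct (Ha e He) as [N HN]. specialize (HN (K + N)%nat ltac:(lia)). unfold Rdist in HN.
  assert (Hg : Un_growing (sum_f_R0 b)).
  { intro n. simpl. pose proof (Rabs_pos (a (S n))). specialize (H (S n)). lra. }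
  pose proof (growing_ineq _ _ Hg Hb (K + N)).
  pose proof (sum_f_R0_tail_le a b K N H).
  replace (la - sum_f_R0 a K) with
    ((sum_f_R0 a (K + N) - sum_f_R0 a K) - (sum_f_R0 a (K + N) - la)) by ring.
  eapply Rle_trans; [apply Rabs_triang | rewrite Rabs_Ropp; lra].
Qed.

Lemma sum_f_R0_cv (u : nat -> nat -> R) (w : nat -> R) (K : nat) :
  (forall k, Un_cv (fun m => u m k) (w k)) ->
  Un_cv (fun m => sum_f_R0 (u m) K) (sum_f_R0 w K).
Proof. intro H. induction K; simpl; [apply H | apply CV_plus; auto]. Qed.

Lemma infinite_sum_dominated_cv (u : nat -> nat -> R) (w b lu : nat -> R) (lb lw : R) :
  (forall m k, Rabs (u m k) <= b k) -> infinite_sum b lb ->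
  (forall k, Un_cv (fun m => u m k) (w k)) ->
  (forall m, infinite_sum (u m) (lu m)) -> infinite_sum w lw ->
  Un_cv lu lw.
Proof.
  intros Hb Hlb Hcv Hu Hw e He.
  assert (Hwb : forall k, Rabs (w k) <= b k).
  { intro k. apply Rabs_le.
    split; [apply (Un_cv_ge_const (fun m => u m k)) | apply (Un_cv_le_const (fun m => u m k))];
      auto; intro m; specialize (Hb m k);
      pose proof (Rle_abs (u m k)); pose proof (Rle_abs (- u m k)); rewrite Rabs_Ropp in *; lra. }
  destruct (Hlb (e / 4) ltac:(lra)) as [K HK]. specialize (HK K (le_n K)).
  assert (Hg : Un_growing (sum_f_R0 b)).
  { intro n. simpl. pose proof (Rabs_pos (w (S n))). specialize (Hwb (S n)). lra. }
  pose proof (growing_ineq _ _ Hg Hlb K). unfold Rdist in HK. rewrite Rabs_left1 in HK by lra.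
  destruct (sum_f_R0_cv u w K Hcv (e / 4) ltac:(lra)) as [N HN].
  exists N. intros m Hm. specialize (HN m Hm). unfold Rdist in *.
  pose proof (infinite_sum_tail_le (u m) b (lu m) lb K (Hb m) (Hu m) Hlb).
  pose proof (infinite_sum_tail_le w b lw lb K Hwb Hw Hlb).
  replace (lu m - lw) with ((lu m - sum_f_R0 (u m) K)
       + (sum_f_R0 (u m) K - sum_f_R0 w K) - (lw - sum_f_R0 w K)) by ring.
  eapply Rle_lt_trans; [apply Rabs_triang | rewrite Rabs_Ropp].
  eapply Rle_lt_trans; [apply Rplus_le_compat_r, Rabs_triang | lra].
Qed.

Lemma exists_bound_lt {T : Type} (f : T -> R) (l : list T) (m c : R) :
  m < c -> (forall b, In b l -> f b < c) ->
  exists M, m <= M < c /\ forall b, In b l -> f b <= M.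
Proof.
  intro Hmc. induction l as [|d l IH]; intro H.
  - exists m. split; [lra | intros b []].
  - destruct IH as [M [HM Hl]]; [intros b Hb; apply H; right; auto|].
    exists (Rmax (f d) M). split.
    + split; [eapply Rle_trans; [apply HM | apply Rmax_r]|].
      apply Rmax_lub_lt; [apply H; left |]; auto; lra.
    + intros b [<-|Hb]; [apply Rmax_l | eapply Rle_trans; [apply Hl, Hb | apply Rmax_r]].
Qed.

Section Operators.
Variable X : Type.

Definition in01 (z : X -> R) : Prop := forall x, 0 <= z x <= 1.
Definition ple (z z' : X -> R) : Prop := forall x, z x <= z' x.
Definition mix (t : R) (z0 z1 : X -> R) (x : X) : R := t * z0 x + (1 - t) * z1 x.

Lemma mix_in01 (t : R) (z0 z1 : X -> R) :
  0 <= t <= 1 -> in01 z0 -> in01 z1 -> in01 (mix t z0 z1).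
Proof. intros Ht H0 H1 x. unfold mix. specialize (H0 x). specialize (H1 x). nra. Qed.

(* The properties of [z |-> G(z|.)] on [[0,1]^X] that the argument uses; convexity is only
   required along ordered pairs, which is all that survives iteration. *)
Record GenOp (T : (X -> R) -> X -> R) : Prop := {
  gen_in01 : forall z, in01 z -> in01 (T z);
  gen_mono : forall z z', in01 z -> in01 z' -> ple z z' -> ple (T z) (T z');
  gen_convex : forall z0 z1 t, in01 z0 -> in01 z1 -> ple z1 z0 -> 0 <= t <= 1 ->
    ple (T (mix t z0 z1)) (mix t (T z0) (T z1));
  gen_cont : forall (z : nat -> X -> R) zi, (forall m, in01 (z m)) -> in01 zi ->
    (forall x, Un_cv (fun m => z m x) (zi x)) ->
    forall x, Un_cv (fun m => T (z m) x) (T zi x)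
}.

Fixpoint iterT (T : (X -> R) -> X -> R) (n : nat) (z : X -> R) : X -> R :=
  match n with O => z | S n' => T (iterT T n' z) end.

Lemma iterT_add T n m z : iterT T (n + m) z = iterT T n (iterT T m z).
Proof. induction n as [|n IH]; simpl; [|rewrite IH]; reflexivity. Qed.

Lemma iterT_Sr T n z : iterT T (S n) z = iterT T n (T z).
Proof. rewrite <- Nat.add_1_r. apply iterT_add. Qed.

Lemma iterT_GenOp T : GenOp T -> forall n, GenOp (iterT T n).
Proof.
  intros [Hin Hmono Hconv Hcont] n. induction n as [|n [Iin Imono Iconv Icont]]; simpl.
  - constructor; auto. intros z0 z1 t _ _ _ _ x. lra.
  - constructor; auto.
    intros z0 z1 t H0 H1 H01 Ht x.
    eapply Rle_trans; [apply Hmono | apply Hconv]; auto using mix_in01.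
Qed.

Section Iteration.
Variable T : (X -> R) -> X -> R.
Hypothesis HT : GenOp T.

Lemma iterT_in01 n z : in01 z -> in01 (iterT T n z).
Proof. apply (gen_in01 _ (iterT_GenOp T HT n)). Qed.

Lemma iterT_ge_subsol z : in01 z -> ple z (T z) -> forall n, ple z (iterT T n z).
Proof.
  intros Hz Hsub n. induction n as [|n IH]; intro x; simpl; [lra|].
  eapply Rle_trans; [apply Hsub | apply (gen_mono _ HT)]; auto using iterT_in01.
Qed.

Lemma iterT_le_supersol z : in01 z -> ple (T z) z -> forall n, ple (iterT T n z) z.
Proof.
  intros Hz Hsup n. induction n as [|n IH]; intro x; simpl; [lra|].
  eapply Rle_trans; [apply (gen_mono _ HT) | apply Hsup]; auto using iterT_in01.
Qed.

Lemma iterT_subsol_cv z x : in01 z -> ple z (T z) ->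
  Un_cv (fun n => iterT T n z x) (limR (fun n => iterT T n z x)).
Proof.
  intros Hz Hsub. apply (Un_cv_limR_growing _ 1).
  - intro n. rewrite iterT_Sr. apply (gen_mono _ (iterT_GenOp T HT n)); auto.
    apply (gen_in01 _ HT); auto.
  - intro n. apply iterT_in01; auto.
Qed.

Lemma iterT_supersol_cv z x : in01 z -> ple (T z) z ->
  Un_cv (fun n => iterT T n z x) (limR (fun n => iterT T n z x)).
Proof.
  intros Hz Hsup. apply (Un_cv_limR_decreasing _ 0).
  - intro n. rewrite iterT_Sr. apply (gen_mono _ (iterT_GenOp T HT n)); auto.
    apply (gen_in01 _ HT); auto.
  - intro n. apply iterT_in01; auto.
Qed.

(* From [a (m + n) <= rho a n + (1 - rho) T^n (tp m) x0], letting first [m] and then [n]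
   tend to infinity gives [lim a <= rho lim a + (1 - rho) c], and [rho < 1]. *)
Lemma iterT_supersol_lim_le zeta x0 rho c (tp : nat -> X -> R) ti :
  in01 zeta -> ple (T zeta) zeta -> 0 <= rho < 1 ->
  (forall m, in01 (tp m)) -> (forall m, ple (tp m) zeta) -> in01 ti ->
  (forall x, Un_cv (fun m => tp m x) (ti x)) ->
  (forall m, ple (iterT T m zeta) (mix rho zeta (tp m))) ->
  (forall n, iterT T n ti x0 <= c) ->
  limR (fun n => iterT T n zeta x0) <= c.
Proof.
  intros Hz Hsup Hrho Htp Htpz Hti Hcv Hmix Hc.
  set (a := fun n => iterT T n zeta x0).
  assert (Ha : Un_cv a (limR a)) by (apply iterT_supersol_cv; auto).
  assert (Hkey : forall n m, a (m + n)%nat <= rho * a n + (1 - rho) * iterT T n (tp m) x0).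
  { intros n m. unfold a. rewrite Nat.add_comm, iterT_add.
    pose proof (iterT_GenOp T HT n) as Tn.
    assert (Hrho1 : 0 <= rho <= 1) by lra.
    eapply Rle_trans; [apply (gen_mono _ Tn) | apply (gen_convex _ Tn)];
      auto using iterT_in01, mix_in01. }
  assert (Hstep : forall n, limR a <= rho * a n + (1 - rho) * c).
  { intro n.
    apply Rle_trans with (rho * a n + (1 - rho) * iterT T n ti x0).
    - apply (@Rle_cv_lim (fun m => a (m + n)%nat)
               (fun m => rho * a n + (1 - rho) * iterT T n (tp m) x0)); auto.
      + apply CV_shift'. exact Ha.
      + apply Un_cv_lin; [apply Un_cv_const | apply (gen_cont _ (iterT_GenOp T HT n)); auto].
    - specialize (Hc n). nra. }
  assert (Hlim : limR a <= rho * limR a + (1 - rho) * c).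
  { apply (@Rle_cv_lim (fun _ => limR a) (fun n => rho * a n + (1 - rho) * c)); auto.
    - apply Un_cv_const.
    - apply Un_cv_lin; [exact Ha | apply Un_cv_const]. }
  fold a. nra.
Qed.

End Iteration.
End Operators.

Arguments in01 {X}. Arguments ple {X}. Arguments mix {X}.

Section GeneratingFunction.
Variable X : Type.
Variable mu : BRW X.
Hypothesis Hprob : is_prob_law mu.

Lemma prodR_in01 (z : X -> R) l : in01 z -> 0 <= prodR (map z l) <= 1.
Proof. intro Hz. induction l as [|a l IH]; simpl; [lra|]. specialize (Hz a). nra. Qed.

Lemma prodR_mono (z z' : X -> R) l : in01 z -> in01 z' -> ple z z' ->
  prodR (map z l) <= prodR (map z' l).
Proof.
  intros Hz Hz' Hle. induction l as [|a l IH]; simpl; [lra|].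
  pose proof (prodR_in01 z l Hz). specialize (Hz a). specialize (Hle a).
  apply Rmult_le_compat; lra.
Qed.

(* One step of the induction: since [z0 >= z1], the factors [z0 a - z1 a] and
   [prod z0 - prod z1] have the same sign, which is Chebyshev's sum inequality. *)
Lemma prodR_convex (z0 z1 : X -> R) t l :
  in01 z0 -> in01 z1 -> ple z1 z0 -> 0 <= t <= 1 ->
  prodR (map (mix t z0 z1) l) <= t * prodR (map z0 l) + (1 - t) * prodR (map z1 l).
Proof.
  intros H0 H1 H10 Ht. induction l as [|a l IH]; simpl; [lra|].
  pose proof (prodR_mono z1 z0 l H1 H0 H10).
  pose proof (prodR_in01 z1 l H1). pose proof (prodR_in01 z0 l H0).
  specialize (H0 a). specialize (H1 a). specialize (H10 a). unfold mix at 1.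
  set (P0 := prodR (map z0 l)) in *. set (P1 := prodR (map z1 l)) in *.
  apply Rle_trans with ((t * z0 a + (1 - t) * z1 a) * (t * P0 + (1 - t) * P1)).
  - apply Rmult_le_compat_l; [nra | exact IH].
  - assert (0 <= t * (1 - t) * ((z0 a - z1 a) * (P0 - P1))).
    { apply Rmult_le_pos; [nra | apply Rmult_le_pos; lra]. }
    nra.
Qed.

Lemma prodR_cv (z : nat -> X -> R) zi l :
  (forall x, Un_cv (fun m => z m x) (zi x)) ->
  Un_cv (fun m => prodR (map (z m) l)) (prodR (map zi l)).
Proof. intro H. induction l; simpl; [apply Un_cv_const | apply CV_mult; auto]. Qed.

Definition G_term (z : X -> R) x k : R := p mu x k * prodR (map z (ch mu x k)).

Lemma G_term_bounds z x k : in01 z -> 0 <= G_term z x k <= p mu x k.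
Proof.
  intro Hz. unfold G_term. pose proof (proj1 (Hprob x) k).
  pose proof (prodR_in01 z (ch mu x k) Hz). nra.
Qed.

Lemma G_infinite_sum z x : in01 z -> infinite_sum (G_term z x) (G mu z x).
Proof.
  intro Hz. destruct (Rseries_CV_comp (G_term z x) (p mu x)) as [l Hl].
  - intro k. apply G_term_bounds; auto.
  - exists 1. exact (proj2 (Hprob x)).
  - unfold G. fold (G_term z x). rewrite (sumR_eq _ l Hl). exact Hl.
Qed.

Lemma G_GenOp : GenOp X (G mu).
Proof.
  pose proof G_infinite_sum as HG. pose proof G_term_bounds as Hb.
  constructor.
  - intros z Hz x. destruct (Hprob x) as [_ H1]. split.
    + apply (infinite_sum_le (fun _ => 0) (G_term z x)); auto.
      * intro k. apply Hb; auto.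
      * intros e He. exists 0%nat. intros. unfold Rdist.
        rewrite sum_eq_R0, Rminus_0_r, Rabs_R0 by auto. lra.
    + apply (infinite_sum_le (G_term z x) (p mu x)); auto. intro k. apply Hb; auto.
  - intros z z' Hz Hz' Hle x. apply (infinite_sum_le (G_term z x) (G_term z' x)); auto.
    intro k. apply Rmult_le_compat_l; [apply (proj1 (Hprob x)) | apply prodR_mono; auto].
  - intros z0 z1 t H0 H1 H10 Ht x. unfold mix at 2.
    apply (infinite_sum_le (G_term (mix t z0 z1) x)
             (fun k => t * G_term z0 x k + (1 - t) * G_term z1 x k));
      auto using mix_in01, infinite_sum_lin.
    intro k. unfold G_term. pose proof (proj1 (Hprob x) k).
    pose proof (prodR_convex z0 z1 t (ch mu x k) H0 H1 H10 Ht). nra.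
  - intros z zi Hz Hzi Hcv x.
    apply (infinite_sum_dominated_cv (fun m => G_term (z m) x) (G_term zi x) (p mu x)
             (fun m => G mu (z m) x) 1); auto.
    + intros m k. destruct (Hb (z m) x k (Hz m)). rewrite Rabs_pos_eq; lra.
    + exact (proj2 (Hprob x)).
    + intro k. apply CV_mult; [apply Un_cv_const | apply prodR_cv; auto].
Qed.

Lemma G_one x : G mu (fun _ => 1) x = 1.
Proof.
  unfold G. apply sumR_eq.
  replace (fun k => p mu x k * prodR (map (fun _ : X => 1) (ch mu x k))) with (p mu x).
  - exact (proj2 (Hprob x)).
  - apply functional_extensionality. intro k.
    induction (ch mu x k) as [|a l IH]; simpl in *; lra.
Qed.

End GeneratingFunction.

Lemma ind_in01 (P : Prop) : 0 <= Defs.ind P <= 1.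
Proof. unfold Defs.ind. destruct (ClassicalDescription.excluded_middle_informative P); lra. Qed.

Lemma ind_true (P : Prop) : P -> Defs.ind P = 1.
Proof. intro H. unfold Defs.ind. destruct (ClassicalDescription.excluded_middle_informative P); tauto. Qed.

Lemma ind_false (P : Prop) : ~ P -> Defs.ind P = 0.
Proof. intro H. unfold Defs.ind. destruct (ClassicalDescription.excluded_middle_informative P); tauto. Qed.

Section Extinction.
Variable X : Type.
Variable mu : BRW X.
Hypothesis Hprob : is_prob_law mu.

Let HG := G_GenOp X mu Hprob.

Lemma const_in01 (c : R) : 0 <= c <= 1 -> in01 (fun _ : X => c).
Proof. intros Hc x. exact Hc. Qed.

Lemma Gn_iterT n z : Gn mu n z = iterT X (G mu) n z.
Proof. induction n as [|n IH]; simpl; [|rewrite IH]; reflexivity. Qed.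

Lemma qbar_cv x : Un_cv (fun n => iterT X (G mu) n (fun _ => 0) x) (qbar mu x).
Proof.
  assert (H0 : in01 (fun _ : X => 0)) by (apply const_in01; lra).
  unfold qbar.
  replace (fun n => Gn mu n (fun _ => 0) x) with (fun n => iterT X (G mu) n (fun _ => 0) x)
    by (apply functional_extensionality; intro n; rewrite Gn_iterT; reflexivity).
  apply iterT_subsol_cv; auto. intro x'. apply (gen_in01 _ _ HG _ H0).
Qed.

Lemma qbar_in01 : in01 (qbar mu).
Proof.
  assert (H0 : in01 (fun _ : X => 0)) by (apply const_in01; lra).
  intro x. pose proof (fun n => iterT_in01 X _ HG n _ H0 x) as Hn.
  split; [apply (Un_cv_ge_const _ _ 0 (fun n => proj1 (Hn n)))
        | apply (Un_cv_le_const _ _ 1 (fun n => proj2 (Hn n)))]; apply qbar_cv.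
Qed.

Lemma G_qbar x : G mu (qbar mu) x = qbar mu x.
Proof.
  assert (H0 : in01 (fun _ : X => 0)) by (apply const_in01; lra).
  apply (UL_sequence (fun n => G mu (iterT X (G mu) n (fun _ => 0)) x)).
  - apply (gen_cont _ _ HG); auto using iterT_in01, qbar_in01, qbar_cv.
  - exact (Un_cv_S _ _ (qbar_cv x)).
Qed.

Lemma F_in01 y N : in01 (F mu y N).
Proof.
  induction N as [|N IH]; intro x; simpl; [apply ind_in01|].
  pose proof (ind_in01 (x <> y)). pose proof (gen_in01 _ _ HG _ IH x). nra.
Qed.

Lemma F_le_G y N : ple (F mu y (S N)) (G mu (F mu y N)).
Proof.
  intro x. simpl. pose proof (ind_in01 (x <> y)).
  pose proof (gen_in01 _ _ HG _ (F_in01 y N) x). nra.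
Qed.

Lemma F_decreasing y x : Un_decreasing (fun N => F mu y N x).
Proof.
  intro N. revert x. induction N as [|N IH]; intro x.
  - pose proof (ind_in01 (x <> y)). pose proof (gen_in01 _ _ HG _ (F_in01 y 0) x).
    simpl in *. nra.
  - apply Rmult_le_compat_l; [apply ind_in01|].
    apply (gen_mono _ _ HG (F mu y (S N)) (F mu y N)); [apply F_in01 | apply F_in01 | exact IH].
Qed.

(* [fl y x] is the probability, starting from [x], that no particle ever visits [y]. *)
Definition fl (y x : X) : R := limR (fun N => F mu y N x).

Lemma fl_cv y x : Un_cv (fun N => F mu y N x) (fl y x).
Proof. apply (Un_cv_limR_decreasing _ 0); [apply F_decreasing | intro N; apply F_in01]. Qed.

Lemma fl_in01 y : in01 (fl y).
Proof.
  intro x. pose proof (fun N => F_in01 y N x) as HN.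
  split; [apply (Un_cv_ge_const _ _ 0 (fun N => proj1 (HN N)))
        | apply (Un_cv_le_const _ _ 1 (fun N => proj2 (HN N)))]; apply fl_cv.
Qed.

Lemma fl_self y : fl y y = 0.
Proof.
  apply (UL_sequence (fun N => F mu y N y)); [apply fl_cv|].
  replace (fun N => F mu y N y) with (fun _ : nat => 0) by
    (apply functional_extensionality; intros [|N]; simpl; rewrite ind_false by tauto; ring).
  apply Un_cv_const.
Qed.

Lemma G_F_cv y x : Un_cv (fun N => G mu (F mu y N) x) (G mu (fl y) x).
Proof. apply (gen_cont _ _ HG); auto using F_in01, fl_in01, fl_cv. Qed.

Lemma G_fl y x : x <> y -> G mu (fl y) x = fl y x.
Proof.
  intro Hxy. apply (UL_sequence (fun N => G mu (F mu y N) x)); [apply G_F_cv|].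
  replace (fun N => G mu (F mu y N) x) with (fun N => F mu y (S N) x).
  - exact (Un_cv_S _ _ (fl_cv y x)).
  - apply functional_extensionality. intro N. simpl. rewrite ind_true by auto. ring.
Qed.

Lemma fl_le_G y : ple (fl y) (G mu (fl y)).
Proof.
  intro x. apply (@Rle_cv_lim (fun N => F mu y (S N) x) (fun N => G mu (F mu y N) x)).
  - intro N. apply F_le_G.
  - exact (Un_cv_S _ _ (fl_cv y x)).
  - apply G_F_cv.
Qed.

Lemma q_cv x y : Un_cv (fun n => iterT X (G mu) n (fl y) x) (q mu x y).
Proof.
  unfold q.
  replace (fun n => limR (fun N => Gn mu n (F mu y N) x))
    with (fun n => iterT X (G mu) n (fl y) x).
  - apply iterT_subsol_cv; auto using fl_in01, fl_le_G.
  - apply functional_extensionality. intro n. symmetry. apply limR_eq.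
    replace (fun N => Gn mu n (F mu y N) x) with (fun N => iterT X (G mu) n (F mu y N) x)
      by (apply functional_extensionality; intro N; rewrite Gn_iterT; reflexivity).
    apply (gen_cont _ _ (iterT_GenOp X _ HG n)); auto using F_in01, fl_in01, fl_cv.
Qed.

Lemma q_eq_qbar_iff_fl_le_qbar y : (forall x, q mu x y = qbar mu x) <-> ple (fl y) (qbar mu).
Proof.
  split.
  - intros Hq x. rewrite <- (Hq x).
    apply (Un_cv_ge_const _ _ _ (fun n => iterT_ge_subsol X _ HG _ (fl_in01 y) (fl_le_G y) n x)).
    apply q_cv.
  - intros Hle x. apply (UL_sequence (fun n => iterT X (G mu) n (fl y) x)); [apply q_cv|].
    apply (Un_cv_squeeze (fun n => iterT X (G mu) n (fun _ => 0) x) _ (fun _ => qbar mu x));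
      [|apply qbar_cv | apply Un_cv_const].
    intro n. pose proof (iterT_GenOp X _ HG n) as Gn. split.
    + apply (gen_mono _ _ Gn); auto using fl_in01. apply const_in01; lra.
      intro z. apply fl_in01.
    + eapply Rle_trans; [apply (gen_mono _ _ Gn _ (qbar mu)); auto using fl_in01, qbar_in01|].
      apply iterT_le_supersol; auto using qbar_in01.
      intro z. rewrite G_qbar. lra.
Qed.

End Extinction.

Section Frozen.
Variable X : Type.
Variable eqdec : forall x y : X, {x = y} + {x <> y}.
Variable mu : BRW X.
Hypothesis Hprob : is_prob_law mu.
Variable A : list X.

Let HG := G_GenOp X mu Hprob.

Definition patch (f g : X -> R) (x : X) : R := if in_dec eqdec x A then f x else g x.

Lemma patch_in01 f g : in01 f -> in01 g -> in01 (patch f g).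
Proof. intros Hf Hg x. unfold patch. destruct (in_dec eqdec x A); auto. Qed.

(* The branching random walk in which particles stop reproducing once they are in [A]. *)
Definition Gfrozen (z : X -> R) : X -> R := patch z (G mu z).

Lemma Gfrozen_GenOp : GenOp X Gfrozen.
Proof.
  constructor; unfold Gfrozen, patch.
  - intros z Hz x. destruct (in_dec eqdec x A); [auto | apply (gen_in01 _ _ HG); auto].
  - intros z z' Hz Hz' Hle x. destruct (in_dec eqdec x A); [auto | apply (gen_mono _ _ HG); auto].
  - intros z0 z1 t H0 H1 H10 Ht x. unfold mix.
    destruct (in_dec eqdec x A); [lra | apply (gen_convex _ _ HG); auto].
  - intros z zi Hz Hzi Hcv x. destruct (in_dec eqdec x A); [auto | apply (gen_cont _ _ HG); auto].
Qed.

Let HF := Gfrozen_GenOp.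

Lemma iterT_Gfrozen_in n z b : In b A -> iterT X Gfrozen n z b = z b.
Proof.
  intro Hb. induction n as [|n IH]; simpl; auto.
  unfold Gfrozen, patch. destruct (in_dec eqdec b A); tauto.
Qed.

Lemma Gfrozen_supersol_of_G z : ple (G mu z) z -> ple (Gfrozen z) z.
Proof. intros Hz x. unfold Gfrozen, patch. destruct (in_dec eqdec x A); [lra | auto]. Qed.

Lemma Gfrozen_patch_one_supersol w : in01 w ->
  ple (Gfrozen (patch w (fun _ => 1))) (patch w (fun _ => 1)).
Proof.
  intros Hw z. assert (Hz : in01 (patch w (fun _ => 1))) by (apply patch_in01; auto; intro; lra).
  pose proof (gen_in01 _ _ HG _ Hz z). unfold Gfrozen, patch in *.
  destruct (in_dec eqdec z A); lra.
Qed.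

(* The left side is the probability that the frozen process has no particle in [A] at
   time [m], hence none at [a] up to time [m]. *)
Lemma iterT_Gfrozen_outside_le_F a m : In a A ->
  ple (iterT X Gfrozen m (patch (fun _ => 0) (fun _ => 1))) (F mu a m).
Proof.
  intro Ha. induction m as [|m IH]; intro z; simpl; unfold patch at 1.
  - destruct (in_dec eqdec z A); [apply ind_in01 | rewrite ind_true; [lra | congruence]].
  - unfold Gfrozen at 1, patch at 1. destruct (in_dec eqdec z A) as [Hz|Hz].
    + rewrite iterT_Gfrozen_in by exact Hz. unfold patch.
      destruct (in_dec eqdec z A); [exact (proj1 (F_in01 X mu Hprob a (S m) z)) | tauto].
    + rewrite ind_true, Rmult_1_l by congruence.
      apply (gen_mono _ _ HG); auto using F_in01.
      apply iterT_in01; auto. apply patch_in01; apply const_in01; lra.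
Qed.

(* [patch w 1] lies below [rho 1 + (1 - rho) 1_{X \ A}]; convexity of the iterates then
   brings in the probability of avoiding [a]. *)
Lemma iterT_Gfrozen_le_mix a w rho m : In a A -> in01 w -> 0 <= rho <= 1 ->
  (forall b, In b A -> w b <= rho) ->
  ple (iterT X Gfrozen m (patch w (fun _ => 1)))
      (mix rho (patch w (fun _ => 1)) (patch w (F mu a m))).
Proof.
  intros Ha Hw Hrho HwA z. pose proof (iterT_GenOp X _ HF m) as Hm.
  assert (H1 : in01 (fun _ : X => 1)) by (apply const_in01; lra).
  assert (Hout : in01 (patch (fun _ => 0) (fun _ => 1))) by
    (apply patch_in01; apply const_in01; lra).
  unfold mix, patch at 2 3. destruct (in_dec eqdec z A) as [Hz|Hz].
  - rewrite iterT_Gfrozen_in by exact Hz. unfold patch.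
    destruct (in_dec eqdec z A); [lra | tauto].
  - apply Rle_trans with (iterT X Gfrozen m (mix rho (fun _ => 1) (patch (fun _ => 0) (fun _ => 1))) z).
    + apply (gen_mono _ _ Hm); auto using patch_in01, mix_in01.
      intro y. unfold mix, patch. destruct (in_dec eqdec y A); [|lra].
      specialize (HwA y i). lra.
    + eapply Rle_trans; [apply (gen_convex _ _ Hm); auto|].
      * intro y. unfold patch. destruct (in_dec eqdec y A); lra.
      * unfold mix. pose proof (proj2 (gen_in01 _ _ Hm _ H1 z)).
        pose proof (iterT_Gfrozen_outside_le_F a m Ha z). nra.
Qed.

End Frozen.

Section Criterion.
Variable X : Type.
Variable eqdec : forall x y : X, {x = y} + {x <> y}.
Variable mu : BRW X.
Hypothesis Hprob : is_prob_law mu.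
Hypothesis Hglob : forall x, qbar mu x < 1.

Let HG := G_GenOp X mu Hprob.

Lemma tau_mix v x : v x = mix (tau mu v x) (fun _ => 1) (qbar mu) x.
Proof. unfold tau, mix. specialize (Hglob x). field. lra. Qed.

Lemma G_mix_one_qbar_le t : 0 <= t <= 1 ->
  ple (G mu (mix t (fun _ => 1) (qbar mu))) (mix t (fun _ => 1) (qbar mu)).
Proof.
  intros Ht x. eapply Rle_trans.
  - apply (gen_convex _ _ HG); auto using qbar_in01.
    + apply const_in01; lra.
    + intro y. apply qbar_in01; auto.
  - unfold mix. rewrite G_one, G_qbar by auto. lra.
Qed.

Lemma max_fl_qbar_witness y x0 : qbar mu x0 < fl X mu y x0 ->
  let v := fun z => Rmax (fl X mu y z) (qbar mu z) in
  in01 v /\ ple (qbar mu) v /\ (forall x, x <> y -> G mu v x >= v x) /\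
  x0 <> y /\ tau mu v y < tau mu v x0.
Proof.
  intros Hx0 v. pose proof (fl_in01 X mu Hprob y) as Hfl. pose proof (qbar_in01 X mu Hprob) as Hq.
  assert (Hv : in01 v).
  { intro z. unfold v. specialize (Hfl z). specialize (Hq z).
    split; [eapply Rle_trans; [|apply Rmax_l]; lra | apply Rmax_lub; lra]. }
  assert (Hy : v y = qbar mu y).
  { unfold v. rewrite (fl_self X mu Hprob). apply Rmax_right, Hq. }
  split; [exact Hv | split; [intro z; apply Rmax_r | split; [|split]]].
  - intros x Hxy. apply Rle_ge, Rmax_lub.
    + rewrite <- (G_fl X mu Hprob y x Hxy). apply (gen_mono _ _ HG); auto.
      intro z. apply Rmax_l.
    + rewrite <- (G_qbar X mu Hprob x). apply (gen_mono _ _ HG); auto.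
      intro z. apply Rmax_r.
  - intros ->. rewrite (fl_self X mu Hprob) in Hx0. specialize (Hq y). lra.
  - unfold tau at 1. rewrite Hy, Rminus_diag, Rdiv_0_l.
    apply Rdiv_lt_0_compat; [|specialize (Hglob x0); lra].
    assert (Hvx0 : fl X mu y x0 <= v x0) by apply Rmax_l. lra.
Qed.

Section Converse.
Variable A : list X.
Variable a : X.
Hypothesis HaA : In a A.
Variable v : X -> R.
Hypothesis Hv : in01 v.
Hypothesis Hvq : ple (qbar mu) v.
Hypothesis Hsub : forall x, ~ In x A -> G mu v x >= v x.
Variable x0 : X.
Hypothesis Htau : forall b, In b A -> tau mu v b < tau mu v x0.

Let T := Gfrozen X eqdec mu A.
Let HT := Gfrozen_GenOp X eqdec mu Hprob A.

Lemma v_le_lim_frozen w : in01 w -> (forall b, In b A -> v b <= w b) ->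
  v x0 <= limR (fun n => iterT X T n (patch X eqdec A w (fun _ => 1)) x0).
Proof.
  intros Hw HvA. set (zeta := patch X eqdec A w (fun _ => 1)).
  assert (Hz : in01 zeta) by (apply patch_in01; auto; apply const_in01; lra).
  apply (Un_cv_ge_const (fun n => iterT X T n zeta x0));
    [|apply iterT_supersol_cv, Gfrozen_patch_one_supersol; auto].
  intro n. eapply Rle_trans.
  - apply (iterT_ge_subsol X T HT v Hv); auto.
    intro z. unfold T, Gfrozen, patch. destruct (in_dec eqdec z A); [lra|].
    apply Rge_le, Hsub; auto.
  - apply (gen_mono _ _ (iterT_GenOp X _ HT n)); auto.
    intro z. unfold zeta, patch. destruct (in_dec eqdec z A); [auto | apply Hv].
Qed.

Lemma lim_frozen_le w rho : in01 w -> ple (G mu w) w -> ple (fl X mu a) w -> 0 <= rho < 1 ->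
  (forall b, In b A -> w b <= rho) ->
  limR (fun n => iterT X T n (patch X eqdec A w (fun _ => 1)) x0) <= w x0.
Proof.
  intros Hw Hwsup Hflw Hrho HrhoA.
  apply (iterT_supersol_lim_le X T HT _ x0 rho (w x0) (fun m => patch X eqdec A w (F mu a m))
           (patch X eqdec A w (fl X mu a))); auto.
  - apply patch_in01; auto. apply const_in01; lra.
  - apply Gfrozen_patch_one_supersol; auto.
  - intro m. apply patch_in01; auto using F_in01.
  - intros m z. unfold patch. destruct (in_dec eqdec z A); [lra | apply F_in01; auto].
  - apply patch_in01; auto using fl_in01.
  - intro z. unfold patch. destruct (in_dec eqdec z A); [apply Un_cv_const | apply fl_cv; auto].
  - intro m. apply iterT_Gfrozen_le_mix; auto. lra.
  - intro n. eapply Rle_trans.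
    + apply (gen_mono _ _ (iterT_GenOp X _ HT n) _ w); auto.
      * apply patch_in01; auto using fl_in01.
      * intro z. unfold patch. destruct (in_dec eqdec z A); [lra | apply Hflw].
    + apply iterT_le_supersol, Gfrozen_supersol_of_G; auto.
Qed.

Lemma fl_not_le_qbar : ~ ple (fl X mu a) (qbar mu).
Proof.
  intro Hfl.
  assert (Htau_in01 : forall x, 0 <= tau mu v x <= 1).
  { intro x. pose proof (tau_mix v x). pose proof (Hv x). pose proof (Hvq x).
    specialize (Hglob x). unfold mix in *. nra. }
  destruct (exists_bound_lt (tau mu v) A 0 (tau mu v x0)) as [M [HM HMA]]; auto.
  { eapply Rle_lt_trans; [apply Htau_in01 | apply Htau, HaA]. }
  pose proof (Htau_in01 x0) as Htau1.
  set (w := mix M (fun _ => 1) (qbar mu)).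
  assert (Hw : in01 w) by
    (apply mix_in01; [lra | apply const_in01; lra | apply qbar_in01; auto]).
  destruct (exists_bound_lt w A 0 1) as [rho [Hrho HrhoA]]; [lra| |].
  { intros b _. unfold w, mix. specialize (Hglob b). nra. }
  assert (HvwA : forall b, In b A -> v b <= w b).
  { intros b Hb. rewrite tau_mix. specialize (HMA b Hb). specialize (Hglob b).
    unfold w, mix. nra. }
  pose proof (v_le_lim_frozen w Hw HvwA) as Hlow.
  assert (Hflw : ple (fl X mu a) w).
  { intro z. unfold w, mix. specialize (Hfl z). pose proof (qbar_in01 X mu Hprob z). nra. }
  pose proof (lim_frozen_le w rho Hw (G_mix_one_qbar_le M ltac:(lra)) Hflw Hrho HrhoA) as Hup.
  assert (w x0 < v x0).
  { rewrite (tau_mix v x0). specialize (Hglob x0). unfold w, mix. nra. }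
  lra.
Qed.

End Converse.
End Criterion.

Theorem mainTheorem4
  (X : Type) (enc : X -> nat) (Henc : forall x y, enc x = enc y -> x = y)
  (eqdec : forall x y : X, {x = y} + {x <> y})
  (mu : BRW X)
  (Hprob : is_prob_law mu)
  (Hmom : bounded_moments eqdec mu)
  (Hirr : irreducible eqdec mu)
  (Hstand : standing_assumption eqdec mu)
  (Hglob : forall x, qbar mu x < 1) :
  (exists x y, q mu x y <> qbar mu x) <->
  (exists (A : list X), A <> nil /\
     exists v : X -> R,
       (forall x, 0 <= v x <= 1) /\
       (forall x, qbar mu x <= v x) /\
       (forall x, ~ In x A -> G mu v x >= v x) /\
       (exists x0, ~ In x0 A /\
          forall a, In a A -> tau mu v a < tau mu v x0)).
Proof.
  split.
  - intros [x [y Hq]].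
    assert (Hfl : ~ ple (fl X mu y) (qbar mu)).
    { intro Hle. apply Hq. apply (q_eq_qbar_iff_fl_le_qbar X mu Hprob y); auto. }
    destruct (not_all_ex_not _ _ Hfl) as [x0 Hx0]. apply Rnot_le_lt in Hx0.
    destruct (max_fl_qbar_witness X mu Hprob Hglob y x0 Hx0) as [Hv [Hvq [Hsub [Hx0y Htau]]]].
    exists (y :: nil). split; [discriminate|].
    exists (fun z => Rmax (fl X mu y z) (qbar mu z)). split; [exact Hv|]. split; [exact Hvq|].
    split.
    + intros z Hz. apply Hsub. intros ->. apply Hz. left. reflexivity.
    + exists x0. split; [intros [->|[]]; auto | intros b [<-|[]]; exact Htau].
  - intros [[|a A] [HA [v [Hv [Hvq [Hsub [x0 [Hx0 Htau]]]]]]]]; [congruence|].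
    apply NNPP. intro Hsls.
    apply (fl_not_le_qbar X eqdec mu Hprob Hglob (a :: A) a (or_introl eq_refl)
             v Hv Hvq Hsub x0 Htau).
    apply (q_eq_qbar_iff_fl_le_qbar X mu Hprob a). intro x.
    apply NNPP. intro Hne. apply Hsls. exists x, a. exact Hne.
Qed.
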